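(* Let $X$ be a locally compact metrizable space, $\Lambda\subset\mathbb{R}$ a compact interval and $\{F_\lambda\}_{\lambda\in\Lambda}$ a parameterized family of discrete multivalued dynamical systems on $X$. Assume $N$ is an isolating neighborhood with respect to $F_\mu$ for some $\mu\in\Lambda$, and $P,Q,R$ are weak index pairs in $N$ with respect to $F_\mu$ with $P\subset\operatorname{int}_NQ$ and $Q\subset\operatorname{int}_NR$ (componentwise). Then there exists a neighborhood $\Lambda_0$ of $\mu$ in $\Lambda$ such that for every $\lambda\in\Lambda_0$ there is a weak index pair $P(\lambda)$ in $N$ with respect to $F_\lambda$ satisfying $P\subset P(\lambda)\subset R$ (componentwise).
   Context: A discrete multivalued dynamical system (dmds) on $X$ is a usc map $F:X\times\mathbb{Z}\multimap X$ with compact values such that $F(x,0)=\{x\}$; $F(F(x,n),m)=F(x,n+m)$ whenever $nm\ge0$; $y\in F(x,-1)\iff x\in F(y,1)$; it is identified with its generator. A parameterized family of dmds is given by an upper semicontinuous map $F:\Lambda\times X\multimap X$ with compact values, determined by a morphism, such that for each $\lambda$, $F_\lambda(x):=F(\lambda,x)$ is (the generator of) a dmds. $\operatorname{Inv}(N,\lambda)$ is the set of $x\in N$ admitting $\sigma:\mathbb{Z}\to N$ with $\sigma(0)=x$, $\sigma(n+1)\in F_\lambda(\sigma(n))$; $N$ compact is an isolating neighborhood for $F_\lambda$ if $\operatorname{Inv}(N,\lambda)\subset\operatorname{int}N$. With $\operatorname{bd}_{F_\lambda}A:=\operatorname{cl}A\cap\operatorname{cl}(F_\lambda(A)\setminus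 A)$, a weak index pair in $N$ with respect to $F_\lambda$ is a pair of compact sets $P_2\subset P_1\subset N$ with (a) $F_\lambda(P_i)\cap N\subset P_i$, (b) $\operatorname{bd}_{F_\lambda}P_1\subset P_2$, (c) $\operatorname{Inv}(N,\lambda)\subset\operatorname{int}(P_1\setminus P_2)$, (d) $P_1\setminus P_2\subset\operatorname{int}N$. Inclusions of pairs such as $P\subset\operatorname{int}_NQ$ mean $P_i\subset\operatorname{int}_NQ_i$ for $i=1,2$. *)

From Stdlib Require Import Reals ZArith List.
Open Scope R_scope.

Definition subset {X : Type} (A B : X -> Prop) : Prop := forall x, A x -> B x.

Definition is_metric {X : Type} (d : X -> X -> R) : Prop :=
  (forall x y, 0 <= d x y) /\ (forall x y, d x y = 0 <-> x = y) /\
  (forall x y, d x y = d y x) /\ (forall x y z, d x z <= d x y + d y z).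

Definition ball {X : Type} (d : X -> X -> R) (x : X) (e : R) : X -> Prop :=
  fun y => d x y < e.

Definition is_open {X : Type} (d : X -> X -> R) (U : X -> Prop) : Prop :=
  forall x, U x -> exists e, 0 < e /\ subset (ball d x e) U.

Definition interior {X : Type} (d : X -> X -> R) (A : X -> Prop) : X -> Prop :=
  fun x => exists e, 0 < e /\ subset (ball d x e) A.

Definition rel_interior {X : Type} (d : X -> X -> R) (N A : X -> Prop) : X -> Prop :=
  fun x => A x /\ exists e, 0 < e /\ subset (fun y => ball d x e y /\ N y) A.

Definition closure {X : Type} (d : X -> X -> R) (A : X -> Prop) : X -> Prop :=
  fun x => forall e, 0 < e -> exists y, A y /\ d x y < e.

Definition is_compact {X : Type} (d : X -> X -> R) (K : X -> Prop) : Prop :=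
  forall (I : Type) (U : I -> X -> Prop),
    (forall i, is_open d (U i)) ->
    subset K (fun x => exists i, U i x) ->
    exists l : list I, subset K (fun x => exists i, In i l /\ U i x).

Definition locally_compact {X : Type} (d : X -> X -> R) : Prop :=
  forall x, exists K, is_compact d K /\ exists e, 0 < e /\ subset (ball d x e) K.

(* image of a set under a multivalued map f (f x y : y ∈ f(x)) *)
Definition image {X : Type} (f : X -> X -> Prop) (A : X -> Prop) : X -> Prop :=
  fun y => exists x, A x /\ f x y.

(* discrete multivalued dynamical system F : X × Z ⊸ X;
   F x n y means y ∈ F(x,n). Z carries the discrete topology. *)
Definition is_dmds {X : Type} (d : X -> X -> R) (F : X -> Z -> X -> Prop) : Prop :=
  (forall x n (U : X -> Prop), is_open d U -> subset (F x n) U ->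
     exists e, 0 < e /\ forall x', d x x' < e -> subset (F x' n) U) /\
  (forall x n, is_compact d (F x n)) /\
  (forall x y, F x 0%Z y <-> y = x) /\
  (forall x n m, (0 <= IZR n * IZR m) ->
     forall y, image (fun a => F a m) (F x n) y <-> F x (n + m)%Z y) /\
  (forall x y, F x (-1)%Z y <-> F y 1%Z x).

Definition is_dmds_generator {X : Type} (d : X -> X -> R) (f : X -> X -> Prop) : Prop :=
  exists F, is_dmds d F /\ forall x y, F x 1%Z y <-> f x y.

Definition in_interval (a b : R) : R -> Prop := fun l => a <= l /\ l <= b.

(* parameterized family of dmds over Λ = [a,b]; F l x y means y ∈ F(l,x).
   (The condition "determined by a morphism" is omitted.) *)
Definition param_family {X : Type} (d : X -> X -> R) (a b : R)
    (F : R -> X -> X -> Prop) : Prop :=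
  (forall l x (U : X -> Prop), in_interval a b l -> is_open d U -> subset (F l x) U ->
     exists e, 0 < e /\ forall l' x', in_interval a b l' -> Rabs (l - l') < e ->
       d x x' < e -> subset (F l' x') U) /\
  (forall l x, in_interval a b l -> is_compact d (F l x)) /\
  (forall l, in_interval a b l -> is_dmds_generator d (F l)).

Definition Inv {X : Type} (f : X -> X -> Prop) (N : X -> Prop) : X -> Prop :=
  fun x => N x /\ exists s : Z -> X,
    (forall n, N (s n)) /\ s 0%Z = x /\ (forall n, f (s n) (s (n + 1)%Z)).

Definition isolating_nbhd {X : Type} (d : X -> X -> R) (f : X -> X -> Prop)
    (N : X -> Prop) : Prop :=
  is_compact d N /\ subset (Inv f N) (interior d N).

Definition setminus {X : Type} (A B : X -> Prop) : X -> Prop := fun x => A x /\ ~ B x.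

Definition bd_f {X : Type} (d : X -> X -> R) (f : X -> X -> Prop) (A : X -> Prop) : X -> Prop :=
  fun x => closure d A x /\ closure d (setminus (image f A) A) x.

Definition weak_index_pair {X : Type} (d : X -> X -> R) (f : X -> X -> Prop)
    (N P1 P2 : X -> Prop) : Prop :=
  is_compact d P1 /\ is_compact d P2 /\ subset P2 P1 /\ subset P1 N /\
  subset (fun x => image f P1 x /\ N x) P1 /\
  subset (fun x => image f P2 x /\ N x) P2 /\
  subset (bd_f d f P1) P2 /\
  subset (Inv f N) (interior d (setminus P1 P2)) /\
  subset (setminus P1 P2) (interior d N).

From Pilot Require Import Defs.
From Stdlib Require Import Reals ZArith List.
Open Scope R_scope.
From Stdlib Require Import Lra Lia Classical ClassicalEpsilon.

(* For λ near μ, let P1(λ) be the set of points reached from P1 by F_λ-paths in N,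
   and P2(λ) the set reached in the same way from Q2 ∩ P1(λ).  Upper semicontinuity
   of (λ, x) ↦ F_λ(x) makes every statement about F_μ-paths of bounded length persist
   for λ near μ, and the compact sets f^j(N) ∩ f^-j(N) decrease to Inv(N, μ); hence a
   long F_λ-path in N cannot pass, in its middle, through a closed set disjoint from
   Inv(N, μ).  So F_λ-paths starting in P1 (resp. Q2) stay in a neighbourhood of P1
   inside Q1 (resp. of Q2 inside R2) and revisit P1 (resp. Q2) within a bounded number
   of steps: P1(λ), P2(λ) are finite unions of compact iterated images, and Inv(N, λ)
   lies in P1 \ P2 away from P2(λ).  The exit-set conditions follow from
   F_λ(P1(λ)) ∩ N ⊂ P1(λ) and Q1 \ Q2 ⊂ int N. *)

(* [Reals] exports its own [interior] for subsets of [R]. *)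
Local Notation interior := Defs.interior.

Definition is_closed {X : Type} (d : X -> X -> R) (A : X -> Prop) : Prop :=
  forall x, closure d A x -> A x.

Definition usc_map {X : Type} (d : X -> X -> R) (g : X -> X -> Prop) : Prop :=
  forall x U, is_open d U -> subset (g x) U ->
    exists e, 0 < e /\ forall x', d x x' < e -> subset (g x') U.

Definition usc_compact_valued {X : Type} (d : X -> X -> R) (g : X -> X -> Prop) : Prop :=
  usc_map d g /\ forall x, is_compact d (g x).

(** * Metric topology *)

Lemma inv_INR_S_pos n : 0 < / INR (S n).
Proof. apply Rinv_0_lt_compat, lt_0_INR; lia. Qed.

Lemma inv_INR_S_le m n : (m <= n)%nat -> / INR (S n) <= / INR (S m).
Proof. intro Hmn. apply Rinv_le_contravar; [apply lt_0_INR; lia | apply le_INR; lia]. Qed.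

Lemma inv_INR_S_lt r : 0 < r -> exists n, / INR (S n) < r.
Proof.
  intros Hr. destruct (archimed_cor1 r Hr) as [n [Hn Hn0]].
  exists n. pose proof (inv_INR_S_le (n - 1) n ltac:(lia)).
  replace (S (n - 1)) with n in H by lia. lra.
Qed.

Section MetricTopology.
Context {X : Type} {d : X -> X -> R}.
Hypothesis Hd : is_metric d.

Lemma dist_refl x : d x x = 0.
Proof. apply Hd. reflexivity. Qed.

Lemma dist_sym x y : d x y = d y x.
Proof. apply Hd. Qed.

Lemma dist_triangle x y z : d x z <= d x y + d y z.
Proof. apply Hd. Qed.

Lemma dist_gt0 x y : x <> y -> 0 < d x y.
Proof.
  intros Hxy. destruct Hd as [Hge0 [Heq _]].
  destruct (Hge0 x y) as [H | H]; [exact H | now destruct Hxy; apply Heq].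
Qed.

Lemma ball_center x e : 0 < e -> ball d x e x.
Proof. unfold ball. rewrite dist_refl. auto. Qed.

Lemma ball_open x e : is_open d (ball d x e).
Proof.
  intros y Hy. exists (e - d x y). split; [unfold ball in Hy; lra |].
  intros z Hz. unfold ball in *. pose proof (dist_triangle x y z). lra.
Qed.

Lemma interior_open A : is_open d (interior d A).
Proof.
  intros x [e [He Hs]]. exists e; split; auto.
  intros y Hy. destruct (ball_open x e y Hy) as [e' [He' Hs']].
  exists e'; split; auto. intros z Hz. apply Hs, Hs', Hz.
Qed.

Lemma interior_subset A : subset (interior d A) A.
Proof. intros x [e [He Hs]]. apply Hs, ball_center, He. Qed.

Lemma open_and (A B : X -> Prop) :
  is_open d A -> is_open d B -> is_open d (fun x => A x /\ B x).
Proof.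
  intros HA HB x [Hx1 Hx2].
  destruct (HA x Hx1) as [e1 [He1 Hs1]], (HB x Hx2) as [e2 [He2 Hs2]].
  exists (Rmin e1 e2). split; [now apply Rmin_glb_lt |].
  intros y Hy. unfold ball in Hy. pose proof (Rmin_l e1 e2). pose proof (Rmin_r e1 e2).
  split; [apply Hs1 | apply Hs2]; unfold ball; lra.
Qed.

Lemma open_or (A B : X -> Prop) :
  is_open d A -> is_open d B -> is_open d (fun x => A x \/ B x).
Proof.
  intros HA HB x [Hx | Hx]; [destruct (HA x Hx) as [e [He Hs]] | destruct (HB x Hx) as [e [He Hs]]];
  exists e; split; auto; intros y Hy; [left | right]; auto.
Qed.

Lemma open_list_union {I : Type} (U : I -> X -> Prop) (l : list I) :
  (forall i, is_open d (U i)) -> is_open d (fun y => exists i, In i l /\ U i y).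
Proof.
  intros HU y [i [Hi Hy]]. destruct (HU i y Hy) as [e [He Hs]].
  exists e; split; auto. intros z Hz. exists i; auto.
Qed.

Lemma open_not_closed C : is_closed d C -> is_open d (fun x => ~ C x).
Proof.
  intros HC x Hx. apply NNPP; intro Hno. apply Hx, HC. intros e He.
  apply NNPP; intro Hfar. apply Hno. exists e; split; auto.
  intros y Hy HCy. apply Hfar. exists y; auto.
Qed.

Lemma closed_not_open U : is_open d U -> is_closed d (fun x => ~ U x).
Proof.
  intros HU x Hx HUx. destruct (HU x HUx) as [e [He Hs]].
  destruct (Hx e He) as [y [Hy Hxy]]. exact (Hy (Hs y Hxy)).
Qed.

Lemma closed_and A B : is_closed d A -> is_closed d B -> is_closed d (fun x => A x /\ B x).
Proof.
  intros HA HB x Hx. split; [apply HA | apply HB]; intros e He;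
  destruct (Hx e He) as [y [[Hy1 Hy2] Hxy]]; exists y; auto.
Qed.

Lemma closure_closed A : is_closed d (closure d A).
Proof.
  intros x Hx e He. destruct (Hx (e / 2)) as [y [Hy Hxy]]; [lra |].
  destruct (Hy (e / 2)) as [z [Hz Hyz]]; [lra |]. exists z; split; auto.
  pose proof (dist_triangle x y z); lra.
Qed.

Lemma subset_closure A : subset A (closure d A).
Proof. intros x Hx e He. exists x. rewrite dist_refl. auto. Qed.

Lemma compact_ext A B : (forall x, A x <-> B x) -> is_compact d A -> is_compact d B.
Proof.
  intros HAB HA I U HU Hcov. destruct (HA I U HU) as [l Hl].
  - intros x Hx; apply Hcov, HAB, Hx.
  - exists l. intros x Hx; apply Hl, HAB, Hx.
Qed.

Lemma compact_nat_cover K (U : nat -> X -> Prop) :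
  is_compact d K -> (forall n, is_open d (U n)) -> (forall n, subset (U n) (U (S n))) ->
  subset K (fun x => exists n, U n x) -> exists n, subset K (U n).
Proof.
  intros HK HU Hinc Hcov. destruct (HK nat U HU Hcov) as [l Hl].
  exists (list_max l). intros x Hx. destruct (Hl x Hx) as [i [Hi HUi]].
  assert (Hle : (i <= list_max l)%nat).
  { exact (proj1 (Forall_forall _ l) (proj1 (list_max_le l _) (le_n _)) i Hi). }
  clear Hi. induction Hle; auto. apply Hinc, IHHle.
Qed.

Lemma compact_dist_lower_bound K z :
  is_compact d K -> ~ K z -> exists r, 0 < r /\ forall x, K x -> r <= d z x.
Proof.
  intros HK Hz.
  destruct (compact_nat_cover K (fun n y => / INR (S n) < d z y) HK) as [n Hn].
  - intros n y Hy. exists (d z y - / INR (S n)). split; [lra |].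
    intros w Hw. unfold ball in Hw. pose proof (dist_triangle z w y).
    pose proof (dist_sym w y). lra.
  - intros n y Hy. pose proof (inv_INR_S_le n (S n) ltac:(lia)). lra.
  - intros x Hx. apply inv_INR_S_lt, dist_gt0. intros ->. contradiction.
  - exists (/ INR (S n)). split; [apply inv_INR_S_pos |]. intros x Hx. left. auto.
Qed.

Lemma compact_closed K : is_compact d K -> is_closed d K.
Proof.
  intros HK z Hz. apply NNPP; intro Hn.
  destruct (compact_dist_lower_bound K z HK Hn) as [r [Hr Hfar]].
  destruct (Hz r Hr) as [y [Hy Hzy]]. specialize (Hfar y Hy). lra.
Qed.

Lemma compact_and_closed K C :
  is_compact d K -> is_closed d C -> is_compact d (fun x => K x /\ C x).
Proof.
  intros HK HC I U HU Hcov.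
  destruct (HK (option I) (fun o x => match o with Some i => U i x | None => ~ C x end))
    as [l Hl].
  - intros [i |]; [apply HU | apply open_not_closed, HC].
  - intros x Hx. destruct (classic (C x)) as [HCx | HCx].
    + destruct (Hcov x (conj Hx HCx)) as [i Hi]. now exists (Some i).
    + now exists None.
  - exists (flat_map (fun o => match o with Some i => i :: nil | None => nil end) l).
    intros x [Hx HCx]. destruct (Hl x Hx) as [[i |] [Hi HUi]]; [| contradiction].
    exists i; split; auto. apply in_flat_map. exists (Some i); simpl; auto.
Qed.

Lemma compact_and K C : is_compact d K -> is_compact d C -> is_compact d (fun x => K x /\ C x).
Proof. intros HK HC. apply compact_and_closed, compact_closed; auto. Qed.

Lemma compact_or A B : is_compact d A -> is_compact d B -> is_compact d (fun x => A x \/ B x).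
Proof.
  intros HA HB I U HU Hcov.
  destruct (HA I U HU) as [l1 H1]; [intros x Hx; apply Hcov; auto |].
  destruct (HB I U HU) as [l2 H2]; [intros x Hx; apply Hcov; auto |].
  exists (l1 ++ l2). intros x [Hx | Hx];
  [destruct (H1 x Hx) as [i [Hi HUi]] | destruct (H2 x Hx) as [i [Hi HUi]]];
  exists i; split; auto; apply in_or_app; auto.
Qed.

Lemma compact_image g K :
  usc_compact_valued d g -> is_compact d K -> is_compact d (image g K).
Proof.
  intros [Hgu Hgc] HK I U HU Hcov.
  (* a point of K, a radius, and a finite subfamily covering g of that ball *)
  set (J := {p : X * R * list I | K (fst (fst p)) /\ 0 < snd (fst p) /\
          forall x', d (fst (fst p)) x' < snd (fst p) ->
            subset (g x') (fun y => exists i, In i (snd p) /\ U i y)}).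
  destruct (HK J (fun p => ball d (fst (fst (proj1_sig p))) (snd (fst (proj1_sig p)))))
    as [l Hl].
  - intro p; apply ball_open.
  - intros x Hx. destruct (Hgc x I U HU) as [lx Hlx].
    { intros y Hy. apply Hcov. exists x; auto. }
    destruct (Hgu x _ (open_list_union U lx HU) Hlx) as [e [He Hs]].
    exists (exist _ ((x, e), lx) (conj Hx (conj He Hs))). now apply ball_center.
  - exists (flat_map (fun p => snd (proj1_sig p)) l).
    intros y [x [Hx Hy]]. destruct (Hl x Hx) as [p [Hp Hxp]].
    destruct (proj2 (proj2 (proj2_sig p)) x Hxp y Hy) as [i [Hi HUi]].
    exists i; split; auto. apply in_flat_map. now exists p.
Qed.

Lemma compact_nested_inter (K : nat -> X -> Prop) :
  (forall n, is_compact d (K n)) -> (forall n, subset (K (S n)) (K n)) ->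
  (forall n, exists x, K n x) -> exists x, forall n, K n x.
Proof.
  intros HK Hdec Hne. apply NNPP; intro Hempty.
  destruct (compact_nat_cover (K 0%nat) (fun n x => ~ K n x) (HK 0%nat)) as [n Hn].
  - intro n; apply open_not_closed, compact_closed, HK.
  - intros n x Hx HSn. apply Hx, Hdec, HSn.
  - intros x Hx. apply NNPP; intro Hall. apply Hempty. exists x. intro n.
    apply NNPP; intro Hn. apply Hall. now exists n.
  - destruct (Hne n) as [x Hx]. apply (Hn x); [| exact Hx].
    clear Hn. induction n; auto. apply IHn, Hdec, Hx.
Qed.

Lemma nbhd_of_rel_interior (N P Q : X -> Prop) :
  subset P (rel_interior d N Q) ->
  exists W, is_open d W /\ subset P W /\ forall y, W y -> N y -> Q y.
Proof.
  intros HPQ.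
  exists (fun y => exists x e, 0 < e /\ subset (fun z => ball d x e z /\ N z) Q /\ d x y < e).
  split; [| split].
  - intros y [x [e [He [Hs Hy]]]]. exists (e - d x y). split; [lra |].
    intros z Hz. exists x, e. repeat split; auto.
    unfold ball in Hz. pose proof (dist_triangle x y z). lra.
  - intros x Hx. destruct (HPQ x Hx) as [_ [e [He Hs]]]. exists x, e.
    repeat split; auto. now apply ball_center.
  - intros y [x [e [He [Hs Hy]]]] HNy. apply Hs. split; auto.
Qed.

Lemma nbhd_closure_avoiding K C U :
  is_compact d K -> is_closed d C -> (forall x, K x -> ~ C x) ->
  is_open d U -> subset K U ->
  exists W, is_open d W /\ subset K W /\ subset W U /\ forall x, closure d W x -> ~ C x.
Proof.
  intros HK HC HKC HU HKU.
  (* balls of radius r around points of K whose doubles miss C *)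
  exists (fun y => exists x r, K x /\ 0 < r /\ (forall w, d x w < 2 * r -> ~ C w) /\
                         subset (ball d x r) U /\ d x y < r).
  split; [| split; [| split]].
  - intros y [x [r [Hx [Hr [HrC [HrU Hy]]]]]]. exists (r - d x y). split; [lra |].
    intros z Hz. exists x, r. repeat split; auto.
    unfold ball in Hz. pose proof (dist_triangle x y z). lra.
  - intros x Hx.
    destruct (open_not_closed C HC x (HKC x Hx)) as [e1 [He1 Hs1]].
    destruct (HU x (HKU x Hx)) as [e2 [He2 Hs2]].
    assert (Hmin : 0 < Rmin e1 e2) by now apply Rmin_glb_lt.
    pose proof (Rmin_l e1 e2). pose proof (Rmin_r e1 e2).
    exists x, (Rmin e1 e2 / 2). repeat split; [exact Hx | lra | | | ].
    + intros w Hw. apply Hs1. unfold ball. lra.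
    + intros w Hw. apply Hs2. unfold ball in *. lra.
    + rewrite dist_refl. lra.
  - intros y [x [r [_ [_ [_ [HrU Hy]]]]]]. apply HrU, Hy.
  - intros z Hcl HCz.
    assert (HKz : ~ K z) by (intro HKz; exact (HKC z HKz HCz)).
    destruct (compact_dist_lower_bound K z HK HKz) as [rho [Hrho Hsep]].
    destruct (Hcl (rho / 2)) as [w [[x [r [Hx [Hr [HrC [_ Hw]]]]]] Hzw]]; [lra |].
    assert (Hxz : 2 * r <= d x z).
    { destruct (Rlt_le_dec (d x z) (2 * r)); auto. exfalso; exact (HrC z r0 HCz). }
    pose proof (Hsep x Hx). pose proof (dist_triangle x w z).
    pose proof (dist_sym w z). pose proof (dist_sym z x). lra.
Qed.

End MetricTopology.

(** * Paths in N and iterated images *)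

Definition converse {X : Type} (g : X -> X -> Prop) : X -> X -> Prop := fun x y => g y x.

Definition invariantN {X : Type} (g : X -> X -> Prop) (N A : X -> Prop) : Prop :=
  forall x y, A x -> g x y -> N y -> A y.

Definition path_in {X : Type} (g : X -> X -> Prop) (N : X -> Prop) (s : nat -> X) (n : nat) :=
  forall i, (i < n)%nat -> g (s i) (s (S i)) /\ N (s (S i)).

Fixpoint iter_imageN {X : Type} (N : X -> Prop) (g : X -> X -> Prop) (A : X -> Prop)
    (j : nat) : X -> Prop :=
  match j with
  | O => A
  | S j => fun y => N y /\ image g (iter_imageN N g A j) y
  end.

Definition reachN {X : Type} (N : X -> Prop) (g : X -> X -> Prop) (A : X -> Prop) (y : X) :=
  exists j, iter_imageN N g A j y.

Lemma forward_orbit {X : Type} (g : X -> X -> Prop) (A : X -> Prop) x0 :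
  (forall x, A x -> exists y, g x y /\ A y) -> A x0 ->
  exists s : nat -> X, s 0%nat = x0 /\ forall n, A (s n) /\ g (s n) (s (S n)).
Proof.
  intros Hsucc Hx0.
  assert (Hnext : forall x, exists y, A x -> g x y /\ A y).
  { intro x. destruct (classic (A x)) as [Hx | Hx].
    - destruct (Hsucc x Hx) as [y Hy]. now exists y.
    - exists x. tauto. }
  set (next := fun x => proj1_sig (constructive_indefinite_description _ (Hnext x))).
  assert (Hnext_spec : forall x, A x -> g x (next x) /\ A (next x)).
  { intro x. unfold next. now destruct (constructive_indefinite_description _ (Hnext x)). }
  exists (fun n => Nat.iter n next x0). split; [reflexivity |].
  assert (HA : forall n, A (Nat.iter n next x0)).
  { induction n; simpl; auto. apply Hnext_spec, IHn. }
  intro n. split; auto. apply Hnext_spec, HA.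
Qed.

Section Paths.
Context {X : Type} (g : X -> X -> Prop) (N : X -> Prop).

Lemma path_in_prefix s n m : path_in g N s n -> (m <= n)%nat -> path_in g N s m.
Proof. intros Hs Hm i Hi. apply Hs. lia. Qed.

Lemma path_in_shift s n k : path_in g N s n -> (k <= n)%nat ->
  path_in g N (fun i => s (k + i)%nat) (n - k).
Proof. intros Hs Hk i Hi. rewrite Nat.add_succ_r. apply Hs. lia. Qed.

Lemma path_in_iter_imageN A s n :
  A (s 0%nat) -> path_in g N s n -> iter_imageN N g A n (s n).
Proof.
  intros Hs0 Hs. induction n; simpl; auto.
  destruct (Hs n) as [Hg HN]; [lia |]. split; auto.
  exists (s n). split; auto. apply IHn, (path_in_prefix s (S n)); auto.
Qed.

Lemma iter_imageN_path A j y :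
  iter_imageN N g A j y -> exists s, A (s 0%nat) /\ path_in g N s j /\ s j = y.
Proof.
  revert y. induction j as [| j IH]; simpl; intros y Hy.
  - exists (fun _ => y). split; [exact Hy |]. split; [intros k Hk; lia | reflexivity].
  - destruct Hy as [HNy [x [Hx Hxy]]]. destruct (IH x Hx) as [s [Hs0 [Hs Hsj]]].
    exists (fun i => if Nat.eqb i (S j) then y else s i). simpl.
    split; [exact Hs0 |]. split; [| now rewrite Nat.eqb_refl].
    intros i Hi. destruct (Nat.eqb_spec i (S j)); [lia |].
    destruct (Nat.eqb_spec (S i) (S j)) as [E | E].
    + assert (i = j) by lia. subst i. rewrite Hsj. auto.
    + apply Hs. lia.
Qed.

Lemma iter_imageN_in_N A j : subset A N -> subset (iter_imageN N g A j) N.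
Proof. intros HA y Hy. destruct j; simpl in Hy; [apply HA | apply Hy]; auto. Qed.

Lemma iter_imageN_invariant A j : invariantN g N A -> subset (iter_imageN N g A j) A.
Proof.
  intros HA. induction j as [| j IH]; simpl; intros y Hy; auto.
  destruct Hy as [HNy [x [Hx Hxy]]]. apply (HA x); auto.
Qed.

Lemma iter_imageN_decreasing j : subset (iter_imageN N g N (S j)) (iter_imageN N g N j).
Proof.
  induction j as [| j IH]; simpl; intros y Hy; [apply Hy |].
  destruct Hy as [HNy [x [Hx Hxy]]]. split; auto. exists x. split; auto.
Qed.

Lemma reachN_base A : subset A (reachN N g A).
Proof. intros x Hx. now exists 0%nat. Qed.

Lemma reachN_invariant A : invariantN g N (reachN N g A).
Proof. intros x y [j Hx] Hxy HNy. exists (S j). split; auto. now exists x. Qed.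

Lemma reachN_in_N A : subset A N -> subset (reachN N g A) N.
Proof. intros HA y [j Hy]. exact (iter_imageN_in_N A j HA y Hy). Qed.

Lemma reachN_least A B : subset A B -> invariantN g N B -> subset (reachN N g A) B.
Proof.
  intros HAB HB y [j Hy]. induction j as [| j IH] in y, Hy |- *; simpl in Hy; auto.
  destruct Hy as [HNy [x [Hx Hxy]]]. apply (HB x); auto.
Qed.

Lemma reachN_path A s n : reachN N g A (s 0%nat) -> path_in g N s n -> reachN N g A (s n).
Proof.
  intros Hs0 Hs. induction n; auto.
  destruct (Hs n) as [Hg HN]; [lia |].
  apply (reachN_invariant A (s n)); auto. apply IHn, (path_in_prefix s (S n)); auto.
Qed.

Lemma Inv_of_two_sided A x0 :
  subset A N ->
  (forall x, A x -> exists y, g x y /\ A y) ->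
  (forall x, A x -> exists w, g w x /\ A w) ->
  A x0 -> Inv g N x0.
Proof.
  intros HAN Hsucc Hpred Hx0.
  destruct (forward_orbit g A x0 Hsucc Hx0) as [fw [Hfw0 Hfw]].
  destruct (forward_orbit (converse g) A x0 Hpred Hx0) as [bw [Hbw0 Hbw]].
  set (s := fun z : Z => if Z.ltb z 0 then bw (Z.to_nat (- z)) else fw (Z.to_nat z)).
  assert (Hs : forall z, A (s z)).
  { intro z; unfold s. destruct (Z.ltb z 0); [apply Hbw | apply Hfw]. }
  split; [now apply HAN |].
  exists s. split; [intro z; apply HAN, Hs |]. split; [exact Hfw0 |].
  intro z. unfold s.
  destruct (Z.ltb_spec z 0); destruct (Z.ltb_spec (z + 1) 0); try lia.
  - replace (Z.to_nat (- z)) with (S (Z.to_nat (- (z + 1)))) by lia. apply Hbw.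
  - replace z with (-1)%Z by lia. simpl. rewrite Hfw0, <- Hbw0. apply Hbw.
  - replace (Z.to_nat (z + 1)) with (S (Z.to_nat z)) by lia. apply Hfw.
Qed.

Lemma Inv_iter_imageN x j :
  Inv g N x -> iter_imageN N g N j x /\ iter_imageN N (converse g) N j x.
Proof.
  intros [HNx [s [HsN [Hs0 Hs]]]]. subst x.
  cut (forall n, iter_imageN N g N j (s n) /\ iter_imageN N (converse g) N j (s n)); [auto |].
  induction j as [| j IH]; intro n; simpl; [auto |]. split.
  - split; auto. exists (s (n - 1)%Z). split; [apply IH |].
    pose proof (Hs (n - 1)%Z) as Hn. now replace (n - 1 + 1)%Z with n in Hn by lia.
  - split; auto. exists (s (n + 1)%Z). split; [apply IH | apply Hs].
Qed.

End Paths.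

(** * The maximal invariant set *)

Definition iter_core {X : Type} (N : X -> Prop) (g : X -> X -> Prop) (x : X) : Prop :=
  forall j, iter_imageN N g N j x /\ iter_imageN N (converse g) N j x.

Section InvariantSet.
Context {X : Type} {d : X -> X -> R}.
Hypothesis Hd : is_metric d.

Lemma iter_imageN_compact N g A j :
  usc_compact_valued d g -> is_compact d N -> is_compact d A ->
  is_compact d (iter_imageN N g A j).
Proof.
  intros Hg HN HA. induction j; simpl; auto. apply compact_and, compact_image; auto.
Qed.

Lemma reachN_compact_of_return N g A L :
  usc_compact_valued d g -> is_compact d N -> is_compact d A ->
  (forall s n, A (s 0%nat) -> path_in g N s n ->
     exists k, (k <= n)%nat /\ (n - k <= L)%nat /\ A (s k)) ->
  is_compact d (reachN N g A).
Proof.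
  intros Hg HN HA Hret.
  assert (Hwindow : forall M,
            is_compact d (fun y => exists j, (j <= M)%nat /\ iter_imageN N g A j y)).
  { induction M as [| M IH].
    - apply compact_ext with (iter_imageN N g A 0); [| apply iter_imageN_compact; auto].
      intro y. split; [now exists 0%nat |].
      intros [j [Hj Hy]]. now replace j with 0%nat in Hy by lia.
    - apply compact_ext with
        (fun y => (exists j, (j <= M)%nat /\ iter_imageN N g A j y) \/ iter_imageN N g A (S M) y);
        [| apply compact_or; auto; apply iter_imageN_compact; auto].
      intro y. split.
      + intros [[j [Hj Hy]] | Hy]; [exists j | exists (S M)]; split; auto.
      + intros [j [Hj Hy]]. destruct (Nat.eq_dec j (S M)) as [-> | Hne]; [now right |].
        left. exists j. split; auto; lia. }
  apply compact_ext with (fun y => exists j, (j <= L)%nat /\ iter_imageN N g A j y); auto.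
  intro y. split; [intros [j [_ Hy]]; now exists j |].
  intros [j Hy]. destruct (iter_imageN_path g N A j y Hy) as [s [Hs0 [Hs <-]]].
  destruct (Hret s j Hs0 Hs) as [k [Hk [HkL Hsk]]].
  exists (j - k)%nat. split; auto.
  pose proof (path_in_iter_imageN g N A (fun i => s (k + i)%nat) (j - k)) as Hend.
  simpl in Hend. rewrite Nat.add_0_r in Hend. replace (k + (j - k))%nat with j in Hend by lia.
  apply Hend; auto. apply path_in_shift; auto.
Qed.

Lemma iter_core_successor N g x :
  is_compact d N -> usc_compact_valued d g -> usc_compact_valued d (converse g) ->
  iter_core N g x -> exists y, g x y /\ iter_core N g y.
Proof.
  intros HN Hg Hg' Hx.
  destruct (compact_nested_inter Hd
    (fun m y => g x y /\ (iter_imageN N g N m y /\ iter_imageN N (converse g) N m y)))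
    as [y Hy].
  - intro m. apply compact_and; auto; [apply Hg |].
    apply compact_and; auto; apply iter_imageN_compact; auto.
  - intros m y [Hxy [H1 H2]]. repeat split; auto; apply iter_imageN_decreasing; auto.
  - intro m. destruct (Hx (S m)) as [_ [HNx [y [Hy Hxy]]]]. exists y.
    split; [exact Hxy |]. split; [| exact Hy].
    apply iter_imageN_decreasing. split; [exact (iter_imageN_in_N _ N N m (fun _ h => h) y Hy) |].
    exists x. split; [apply Hx | exact Hxy].
  - exists y. split; [apply (Hy 0%nat) | intro j; apply Hy].
Qed.

Lemma Inv_of_iter_core N g x :
  is_compact d N -> usc_compact_valued d g -> usc_compact_valued d (converse g) ->
  iter_core N g x -> Inv g N x.
Proof.
  intros HN Hg Hg'.
  apply Inv_of_two_sided.
  - intros y Hy. apply (Hy 0%nat).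
  - intros y Hy. now apply iter_core_successor.
  - intros y Hy. destruct (iter_core_successor N (converse g) y HN Hg' Hg) as [w [Hyw Hw]].
    + intro j. split; apply (Hy j).
    + exists w. split; [exact Hyw |]. intro j. split; apply (Hw j).
Qed.

Section Core.
Variables (N : X -> Prop) (g : X -> X -> Prop).
Hypothesis HN : is_compact d N.
Hypothesis Hg : usc_compact_valued d g.
Hypothesis Hg' : usc_compact_valued d (converse g).

Lemma Inv_closed : is_closed d (Inv g N).
Proof.
  intros x Hx. apply Inv_of_iter_core; auto. intro j.
  split; apply (compact_closed Hd); try (apply iter_imageN_compact; auto);
  intros e He; destruct (Hx e He) as [y [Hy Hxy]]; exists y; split; auto;
  apply (Inv_iter_imageN g N y j Hy).
Qed.

Lemma iter_core_stage C :
  is_closed d C -> subset C N -> (forall x, C x -> ~ Inv g N x) ->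
  exists m, forall x, C x -> iter_imageN N g N m x -> iter_imageN N (converse g) N m x -> False.
Proof.
  intros HC HCN HCInv.
  destruct (compact_nat_cover (d := d) (fun x => N x /\ C x)
    (fun m x => ~ (iter_imageN N g N m x /\ iter_imageN N (converse g) N m x)))
    as [m Hm].
  - apply compact_and_closed; auto.
  - intro m. apply open_not_closed, compact_closed, compact_and; auto;
      apply iter_imageN_compact; auto.
  - intros m x Hx [H1 H2]. apply Hx. split; apply iter_imageN_decreasing; auto.
  - intros x [HNx HCx]. apply NNPP; intro Hall. apply (HCInv x HCx), Inv_of_iter_core; auto.
    intro j. apply NNPP; intro Hj. apply Hall. now exists j.
  - exists m. intros x HCx H1 H2. exact (Hm x (conj (HCN x HCx) HCx) (conj H1 H2)).
Qed.

End Core.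
End InvariantSet.

Lemma closure_escape_not_interior {X : Type} {d : X -> X -> R} (g : X -> X -> Prop)
    (N A : X -> Prop) x :
  invariantN g N A -> closure d (setminus (image g A) A) x -> ~ interior d N x.
Proof.
  intros HA Hx [e [He HeN]]. destruct (Hx e He) as [y [[[z [Hz Hzy]] HAy] Hxy]].
  exact (HAy (HA z y Hz Hzy (HeN y Hxy))).
Qed.

Section ReachIndexPair.
Context {X : Type} {d : X -> X -> R} (g : X -> X -> Prop) (N P1 Q1 Q2 O : X -> Prop).
Hypothesis Hd : is_metric d.
Hypothesis HP1N : subset P1 N.
Hypothesis HQN : subset (setminus Q1 Q2) (interior d N).
Hypothesis HPL1c : is_compact d (reachN N g P1).
Hypothesis HPL2c : is_compact d (reachN N g (fun x => Q2 x /\ reachN N g P1 x)).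
Hypothesis HPL1Q1 : subset (reachN N g P1) Q1.
Hypothesis HO : is_open d O.
Hypothesis HOP1 : subset O P1.
Hypothesis HOPL2 : forall x, O x -> ~ reachN N g (fun x => Q2 x /\ reachN N g P1 x) x.
Hypothesis HInvO : subset (Inv g N) O.

Lemma reachN_exit x :
  reachN N g P1 x -> ~ interior d N x -> reachN N g (fun x => Q2 x /\ reachN N g P1 x) x.
Proof.
  intros Hx HxN. apply reachN_base. split; auto.
  apply NNPP; intro HQ2. apply HxN, HQN. split; auto.
Qed.

Lemma weak_index_pair_reachN :
  weak_index_pair d g N (reachN N g P1) (reachN N g (fun x => Q2 x /\ reachN N g P1 x)).
Proof.
  assert (HPL21 : subset (reachN N g (fun x => Q2 x /\ reachN N g P1 x)) (reachN N g P1)).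
  { apply reachN_least; [intros x [_ Hx]; exact Hx | apply reachN_invariant]. }
  repeat split; auto.
  - now apply reachN_in_N.
  - intros y [[x [Hx Hxy]] HNy]. now apply (reachN_invariant _ _ _ x).
  - intros y [[x [Hx Hxy]] HNy]. now apply (reachN_invariant _ _ _ x).
  - intros x [Hcl Hesc]. apply reachN_exit.
    + now apply (compact_closed Hd).
    + apply (closure_escape_not_interior g N (reachN N g P1)); auto. apply reachN_invariant.
  - intros x HInv. destruct (HO x (HInvO x HInv)) as [e [He HeO]].
    exists e. split; auto. intros y Hy. split.
    + apply reachN_base, HOP1, HeO, Hy.
    + apply HOPL2, HeO, Hy.
  - intros x [Hx1 Hx2]. apply NNPP; intro Hint. exact (Hx2 (reachN_exit x Hx1 Hint)).
Qed.

End ReachIndexPair.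

(** * Small perturbations of the parameter *)

Definition family_usc {X : Type} (d : X -> X -> R) (a b : R) (F : R -> X -> X -> Prop) : Prop :=
  forall l x (U : X -> Prop), in_interval a b l -> is_open d U -> subset (F l x) U ->
    exists e, 0 < e /\ forall l' x', in_interval a b l' -> Rabs (l - l') < e ->
      d x x' < e -> subset (F l' x') U.

Section NearParameter.
Variables a b mu : R.

Definition near_mu (P : R -> Prop) : Prop :=
  exists e, 0 < e /\ forall l, in_interval a b l -> Rabs (l - mu) < e -> P l.

Lemma near_mu_always (P : R -> Prop) : (forall l, P l) -> near_mu P.
Proof. intros HP. exists 1. split; [lra | auto]. Qed.

Lemma near_mu_impl {P Q : R -> Prop} :
  near_mu P -> (forall l, in_interval a b l -> P l -> Q l) -> near_mu Q.
Proof. intros [e [He HP]] HPQ. exists e. split; auto. Qed.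

Lemma near_mu_and {P Q : R -> Prop} :
  near_mu P -> near_mu Q -> near_mu (fun l => P l /\ Q l).
Proof.
  intros [e1 [He1 HP]] [e2 [He2 HQ]]. exists (Rmin e1 e2). split; [now apply Rmin_glb_lt |].
  intros l Hl Hlt. pose proof (Rmin_l e1 e2). pose proof (Rmin_r e1 e2).
  split; [apply HP | apply HQ]; auto; lra.
Qed.

Lemma near_mu_forall_le (P : nat -> R -> Prop) M :
  (forall n, near_mu (P n)) -> near_mu (fun l => forall n, (n <= M)%nat -> P n l).
Proof.
  intros HP. induction M as [| M IH].
  - apply (near_mu_impl (HP 0%nat)). intros l _ Hl n Hn.
    now replace n with 0%nat by lia.
  - apply (near_mu_impl (near_mu_and IH (HP (S M)))). intros l _ [HM HSM] n Hn.
    destruct (Nat.eq_dec n (S M)) as [-> | Hne]; auto. apply HM. lia.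
Qed.

End NearParameter.

Arguments near_mu_always {a b mu P}.
Arguments near_mu_impl {a b mu P Q}.
Arguments near_mu_and {a b mu P Q}.
Arguments near_mu_forall_le {a b mu P}.

Section Perturbation.
Context {X : Type} {d : X -> X -> R} (N : X -> Prop) (F : R -> X -> X -> Prop) (a b mu : R).
Hypothesis Hd : is_metric d.
Hypothesis HN : is_compact d N.
Hypothesis HFu : family_usc d a b F.
Hypothesis HFc : forall l x, in_interval a b l -> is_compact d (F l x).
Hypothesis Hmu : in_interval a b mu.
Hypothesis Hconv : usc_compact_valued d (converse (F mu)).

Local Notation near := (near_mu a b mu).

Lemma F_usc_compact l : in_interval a b l -> usc_compact_valued d (F l).
Proof.
  intros Hl. split; [| intro x; now apply HFc].
  intros x U HU HxU. destruct (HFu l x U Hl HU HxU) as [e [He HF]].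
  exists e. split; auto. intros x' Hx'. apply HF; auto. now rewrite Rminus_diag, Rabs_R0.
Qed.

Lemma N_closed : is_closed d N.
Proof. now apply compact_closed. Qed.

Lemma perturbed_step K U :
  is_compact d K -> is_open d U -> (forall x y, K x -> F mu x y -> N y -> U y) ->
  exists V, is_open d V /\ subset K V /\
    near (fun l => forall x y, V x -> F l x y -> N y -> U y).
Proof.
  intros HK HU HKU.
  set (U' := fun y => U y \/ ~ N y).
  assert (HU' : is_open d U') by (apply open_or, open_not_closed, N_closed; auto).
  set (G := fun n x => forall l, in_interval a b l -> Rabs (l - mu) < / INR (S n) ->
                               subset (F l x) U').
  destruct (compact_nat_cover K (fun n => interior d (G n)) HK) as [n Hn].
  - intro n. apply interior_open, Hd.
  - intros n x [e [He Hs]]. exists e. split; auto. intros y Hy l Hl Hlt. apply (Hs y Hy l Hl).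
    pose proof (inv_INR_S_le n (S n) ltac:(lia)). lra.
  - intros x Hx. destruct (HFu mu x U' Hmu HU') as [e [He HFe]].
    { intros y Hy. destruct (classic (N y)); [left; apply (HKU x) | right]; auto. }
    destruct (inv_INR_S_lt e He) as [n Hn]. exists n, e. split; auto.
    intros x' Hx' l Hl Hlt. apply HFe; auto. rewrite Rabs_minus_sym. lra.
  - exists (interior d (G n)). split; [apply interior_open, Hd |]. split; auto.
    exists (/ INR (S n)). split; [apply inv_INR_S_pos |].
    intros l Hl Hlt x y Hx Hy HNy. apply (interior_subset Hd) in Hx.
    destruct (Hx l Hl Hlt y Hy); [auto | contradiction].
Qed.

Lemma perturbed_paths_end A j :
  is_compact d A -> forall W, is_open d W -> subset (iter_imageN N (F mu) A j) W ->
  near (fun l => forall s, A (s 0%nat) -> path_in (F l) N s j -> W (s j)).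
Proof.
  intros HA. induction j as [| j IH]; intros W HW HjW.
  - apply near_mu_always. intros l s Hs0 _. apply HjW, Hs0.
  - destruct (perturbed_step (iter_imageN N (F mu) A j) W) as [V [HV [HjV Hnear]]]; auto.
    { apply iter_imageN_compact; auto. now apply F_usc_compact. }
    { intros x y Hx Hxy HNy. apply HjW. split; auto. now exists x. }
    apply (near_mu_impl (near_mu_and Hnear (IH V HV HjV))).
    intros l _ [Hstep Hpre] s Hs0 Hs. destruct (Hs j) as [Hg HNs]; [lia |].
    apply (Hstep (s j)); auto. apply Hpre; auto. apply (path_in_prefix _ _ s (S j)); auto.
Qed.

Lemma perturbed_paths_stay A W M :
  is_compact d A -> invariantN (F mu) N A -> is_open d W -> subset A W ->
  near (fun l => forall n s, (n <= M)%nat -> A (s 0%nat) -> path_in (F l) N s n -> W (s n)).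
Proof.
  intros HA HAinv HW HAW.
  assert (Hend : forall n, near (fun l => forall s, A (s 0%nat) -> path_in (F l) N s n -> W (s n))).
  { intro n. apply perturbed_paths_end; auto. intros y Hy.
    apply HAW, (iter_imageN_invariant (F mu) N A n); auto. }
  apply (near_mu_impl (near_mu_forall_le M Hend)). intros l _ Hl n s Hn. now apply Hl.
Qed.

Lemma perturbed_no_paths j :
  forall B, is_compact d B -> subset B N ->
  (forall x, B x -> ~ iter_imageN N (converse (F mu)) N j x) ->
  exists V, is_open d V /\ subset B V /\
    near (fun l => forall s, V (s 0%nat) -> ~ path_in (F l) N s j).
Proof.
  induction j as [| j IH]; intros B HB HBN HBj.
  - exists (fun _ => False). split; [intros x [] |]. split.
    + intros x Hx. exact (HBj x Hx (HBN x Hx)).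
    + apply near_mu_always. intros l s [].
  - destruct (IH (iter_imageN N (F mu) B 1)) as [V' [HV' [HBV' Hnear']]].
    { apply iter_imageN_compact; auto. now apply F_usc_compact. }
    { intros y [HNy _]. exact HNy. }
    { intros y [HNy [x [Hx Hxy]]] Hy. apply (HBj x Hx). split; [now apply HBN |].
      now exists y. }
    destruct (perturbed_step B V') as [V [HV [HBV Hnear]]]; auto.
    { intros x y Hx Hxy HNy. apply HBV'. split; auto. now exists x. }
    exists V. split; auto. split; auto.
    apply (near_mu_impl (near_mu_and Hnear Hnear')). intros l _ [Hstep Hno] s Hs0 Hs.
    destruct (Hs 0%nat) as [Hg HN1]; [lia |].
    apply (Hno (fun i => s (1 + i)%nat)).
    + apply (Hstep (s 0%nat)); auto.
    + pose proof (path_in_shift _ _ s (S j) 1 Hs ltac:(lia)) as Hshift.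
      now replace (S j - 1)%nat with j in Hshift by lia.
Qed.

Lemma perturbed_isolation C :
  is_closed d C -> subset C N -> (forall x, C x -> ~ Inv (F mu) N x) ->
  exists m, near (fun l => forall s, N (s 0%nat) -> path_in (F l) N s (m + m) -> ~ C (s m)).
Proof.
  intros HC HCN HCInv.
  destruct (iter_core_stage Hd N (F mu) HN (F_usc_compact mu Hmu) Hconv C HC HCN HCInv)
    as [m Hm].
  (* the first half of a perturbed 2m-path lands near the m-th image of N, from which
     no perturbed m-path can start if it lies in C *)
  destruct (perturbed_no_paths m (fun x => iter_imageN N (F mu) N m x /\ C x))
    as [V [HV [HBV Hno]]].
  { apply compact_and_closed; auto. apply iter_imageN_compact; auto. now apply F_usc_compact. }
  { intros x [Hx _]. exact (iter_imageN_in_N _ N N m (fun _ h => h) x Hx). }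
  { intros x [H1 H2] H3. exact (Hm x H2 H1 H3). }
  assert (Hend : near (fun l => forall s, N (s 0%nat) -> path_in (F l) N s m ->
                                V (s m) \/ ~ C (s m))).
  { apply (perturbed_paths_end N m HN (fun x => V x \/ ~ C x)).
    - apply open_or; auto. apply open_not_closed; auto.
    - intros x Hx. destruct (classic (C x)); [left; apply HBV | right]; auto. }
  exists m. apply (near_mu_impl (near_mu_and Hend Hno)).
  intros l _ [Hl1 Hl2] s Hs0 Hs HCm.
  destruct (Hl1 s Hs0) as [HVm | HnC]; [apply (path_in_prefix _ _ s (m + m)); auto; lia | | auto].
  apply (Hl2 (fun i => s (m + i)%nat)).
  - now rewrite Nat.add_0_r.
  - pose proof (path_in_shift _ _ s (m + m) m Hs ltac:(lia)) as Hshift.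
    now replace (m + m - m)%nat with m in Hshift by lia.
Qed.

Lemma perturbed_return A W C :
  is_compact d A -> invariantN (F mu) N A -> is_open d W -> subset A W ->
  is_closed d C -> subset C N -> (forall x, C x -> ~ Inv (F mu) N x) ->
  (forall y, W y -> N y -> ~ A y -> C y) ->
  exists L, near (fun l => forall s n, A (s 0%nat) -> path_in (F l) N s n ->
    W (s n) /\ exists k, (k <= n)%nat /\ (n - k <= L)%nat /\ A (s k)).
Proof.
  intros HA HAinv HW HAW HC HCN HCInv HWC.
  destruct (perturbed_isolation C HC HCN HCInv) as [m Hiso].
  exists (m + m + 1)%nat.
  apply (near_mu_impl
    (near_mu_and Hiso (perturbed_paths_stay A W (m + m + 1) HA HAinv HW HAW))).
  intros l _ [Hmid Hshort] s n Hs0 Hs.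
  assert (HNs : forall p, (1 <= p <= n)%nat -> N (s p)).
  { intros [| p] Hp; [lia |]. apply (Hs p). lia. }
  (* a stretch of 2m+1 steps inside W avoiding A would put its middle point in C *)
  assert (Hvisit : forall j, (j <= n)%nat -> (forall p, (p < j)%nat -> W (s p)) ->
            exists k, (k <= j)%nat /\ (j - k <= m + m + 1)%nat /\ A (s k)).
  { intros j Hj HWp. apply NNPP; intro Hno.
    assert (Hlong : (m + m + 1 < j)%nat).
    { destruct (le_lt_dec j (m + m + 1)) as [Hle | Hlt]; auto.
      exfalso. apply Hno. exists 0%nat. repeat split; auto; lia. }
    set (t := (j - (m + m + 1))%nat).
    apply (Hmid (fun i => s (t + i)%nat)).
    - rewrite Nat.add_0_r. apply HNs. lia.
    - apply (path_in_prefix _ _ _ (n - t)); [apply path_in_shift |]; auto; lia.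
    - apply HWC; [apply HWp; lia | apply HNs; lia |].
      intro HAm. apply Hno. exists (t + m)%nat. repeat split; auto; lia. }
  assert (HWall : forall j, (j <= n)%nat -> W (s j)).
  { intro j. induction j as [j IH] using (well_founded_induction lt_wf). intros Hj.
    destruct (Hvisit j Hj) as [k [Hkj [HkL Hk]]]; [intros p Hp; apply IH; lia |].
    replace j with (k + (j - k))%nat by lia.
    apply (Hshort (j - k)%nat (fun i => s (k + i)%nat)); auto.
    - now rewrite Nat.add_0_r.
    - apply path_in_shift; auto. apply (path_in_prefix _ _ s n); auto. }
  split; [apply HWall; lia |]. apply Hvisit; auto. intros p Hp. apply HWall. lia.
Qed.

Lemma Inv_perturbed_in_open O :
  is_open d O -> subset (Inv (F mu) N) O -> near (fun l => subset (Inv (F l) N) O).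
Proof.
  intros HO HInvO.
  destruct (perturbed_isolation (fun x => N x /\ ~ O x)) as [m Hiso].
  - apply closed_and; [apply N_closed | apply closed_not_open; auto].
  - intros x [Hx _]. exact Hx.
  - intros x [_ HOx] HInv. exact (HOx (HInvO x HInv)).
  - apply (near_mu_impl Hiso). intros l _ Hl x [HNx [s [HsN [Hs0 Hs]]]].
    apply NNPP; intro HOx.
    apply (Hl (fun i => s (Z.of_nat i - Z.of_nat m)%Z)).
    + apply HsN.
    + intros i Hi. split; [| apply HsN].
      replace (Z.of_nat (S i) - Z.of_nat m)%Z with (Z.of_nat i - Z.of_nat m + 1)%Z by lia.
      apply Hs.
    + replace (Z.of_nat m - Z.of_nat m)%Z with 0%Z by lia. rewrite Hs0. now split.
Qed.

Section Continuation.
Variables P1 P2 Q1 Q2 R1 R2 : X -> Prop.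
Hypothesis HP : weak_index_pair d (F mu) N P1 P2.
Hypothesis HQ : weak_index_pair d (F mu) N Q1 Q2.
Hypothesis HPQ1 : subset P1 (rel_interior d N Q1).
Hypothesis HPQ2 : subset P2 (rel_interior d N Q2).
Hypothesis HQR1 : subset Q1 (rel_interior d N R1).
Hypothesis HQR2 : subset Q2 (rel_interior d N R2).

Lemma reach_P1_near :
  near (fun l => is_compact d (reachN N (F l) P1) /\ subset (reachN N (F l) P1) Q1).
Proof.
  destruct HP as (HP1c & _ & _ & _ & HP1inv & _ & _ & HPInv & _).
  destruct (nbhd_of_rel_interior Hd N P1 Q1 HPQ1) as [W [HW [HPW HWQ]]].
  destruct (perturbed_return P1 W (fun y => N y /\ ~ interior d (setminus P1 P2) y))
    as [L Hret]; auto.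
  - intros x y Hx Hxy HNy. apply HP1inv. split; auto. now exists x.
  - apply closed_and; [apply N_closed | apply closed_not_open, interior_open, Hd].
  - intros x [Hx _]. exact Hx.
  - intros x [_ Hx] HInv. exact (Hx (HPInv x HInv)).
  - intros y _ HNy HPy. split; auto. intros Hint.
    apply HPy. now destruct (interior_subset Hd _ y Hint).
  - apply (near_mu_impl Hret). intros l Hl Hpaths. split.
    + apply (reachN_compact_of_return Hd N (F l) P1 L); auto; [now apply F_usc_compact |].
      intros s n Hs0 Hs. apply (Hpaths s n Hs0 Hs).
    + intros y [j Hy]. destruct (iter_imageN_path (F l) N P1 j y Hy) as [s [Hs0 [Hs <-]]].
      apply HWQ; [apply (Hpaths s j Hs0 Hs) |].
      apply (iter_imageN_in_N (F l) N P1 j); auto. apply HP.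
Qed.

Lemma nbhd_Q2 :
  exists W, is_open d W /\ subset Q2 W /\ (forall y, W y -> N y -> R2 y) /\
    forall x, closure d W x -> ~ Inv (F mu) N x.
Proof.
  destruct HQ as (_ & HQ2c & _ & _ & _ & _ & _ & HQInv & _).
  destruct (nbhd_of_rel_interior Hd N Q2 R2 HQR2) as [U [HU [HQU HUR]]].
  destruct (nbhd_closure_avoiding Hd Q2 (Inv (F mu) N) U) as [W [HW [HQW [HWU HWInv]]]]; auto.
  - apply Inv_closed; auto. now apply F_usc_compact.
  - intros x HQ2x HInv. now destruct (interior_subset Hd _ x (HQInv x HInv)).
  - exists W. repeat split; auto.
Qed.

Lemma reach_Q2_near W :
  is_open d W -> subset Q2 W -> (forall x, closure d W x -> ~ Inv (F mu) N x) ->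
  near (fun l => is_compact d (reachN N (F l) P1) ->
    is_compact d (reachN N (F l) (fun x => Q2 x /\ reachN N (F l) P1 x)) /\
    subset (reachN N (F l) (fun x => Q2 x /\ reachN N (F l) P1 x)) W).
Proof.
  intros HW HQW HWInv.
  destruct HQ as (_ & HQ2c & HQ21 & HQ1N & _ & HQ2inv & _ & _ & _).
  destruct (perturbed_return Q2 W (fun y => N y /\ closure d W y)) as [L Hret]; auto.
  - intros x y Hx Hxy HNy. apply HQ2inv. split; auto. now exists x.
  - apply closed_and; [apply N_closed | apply closure_closed, Hd].
  - intros x [Hx _]. exact Hx.
  - intros x [_ Hx]. now apply HWInv.
  - intros y Hy HNy _. split; auto. now apply subset_closure.
  - apply (near_mu_impl Hret). intros l Hl Hpaths HPL1c. split.
    + apply (reachN_compact_of_return Hd N (F l) _ L); auto;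
        [now apply F_usc_compact | apply compact_and; auto |].
      intros s n [Hs0 HPL1] Hs. destruct (Hpaths s n Hs0 Hs) as [_ [k [Hkn [HkL Hk]]]].
      exists k. repeat split; auto. apply reachN_path; auto.
      apply (path_in_prefix _ _ s n); auto.
    + intros y [j Hy]. destruct (iter_imageN_path (F l) N _ j y Hy) as [s [[Hs0 _] [Hs <-]]].
      apply (Hpaths s j Hs0 Hs).
Qed.

Lemma continuation_near :
  near (fun l => exists PL1 PL2 : X -> Prop, weak_index_pair d (F l) N PL1 PL2 /\
    subset P1 PL1 /\ subset P2 PL2 /\ subset PL1 R1 /\ subset PL2 R2).
Proof.
  destruct nbhd_Q2 as [W [HW [HQW [HWR2 HWInv]]]].
  pose proof (reach_Q2_near W HW HQW HWInv) as HPL2near.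
  destruct HP as (_ & _ & HP21 & HP1N & _ & _ & _ & HPInv & _).
  destruct HQ as (_ & HQ2c & _ & _ & _ & _ & _ & HQInv & HQN).
  (* a neighbourhood of Inv(N, mu) inside P1 \ P2 that stays away from the candidate exit set *)
  set (O := fun x => interior d (setminus P1 P2) x /\ ~ (N x /\ closure d W x) /\ ~ Q2 x).
  assert (HO : is_open d O).
  { apply open_and; [apply interior_open, Hd |].
    apply open_and; apply open_not_closed; [| now apply compact_closed].
    apply closed_and; [apply N_closed | apply closure_closed, Hd]. }
  assert (HInvO : near (fun l => subset (Inv (F l) N) O)).
  { apply Inv_perturbed_in_open; auto. intros x HInv. repeat split.
    - now apply HPInv.
    - intros [_ Hcl]. exact (HWInv x Hcl HInv).
    - intros HQ2x. now destruct (interior_subset Hd _ x (HQInv x HInv)). }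
  apply (near_mu_impl (near_mu_and reach_P1_near (near_mu_and HPL2near HInvO))).
  intros l _ [[HPL1c HPL1Q1] [HPL2 HlInv]]. destruct (HPL2 HPL1c) as [HPL2c HPL2W].
  assert (HPL2N : subset (reachN N (F l) (fun x => Q2 x /\ reachN N (F l) P1 x)) N).
  { apply reachN_in_N. intros x [_ Hx]. exact (reachN_in_N _ _ _ HP1N x Hx). }
  exists (reachN N (F l) P1), (reachN N (F l) (fun x => Q2 x /\ reachN N (F l) P1 x)).
  split; [| split; [| split; [| split]]].
  - apply (weak_index_pair_reachN (F l) N P1 Q1 Q2 O); auto.
    + intros x [Hx _]. exact (proj1 (interior_subset Hd _ x Hx)).
    + intros x [_ [HCx _]] HPL2x. apply HCx. split; [now apply HPL2N |].
      now apply subset_closure, HPL2W.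
  - apply reachN_base.
  - intros x Hx. apply reachN_base. split; [apply HPQ2, Hx |]. now apply reachN_base, HP21.
  - intros x Hx. apply HQR1, HPL1Q1, Hx.
  - intros x Hx. apply HWR2; auto.
Qed.

End Continuation.
End Perturbation.

Lemma dmds_generator_converse {X : Type} (d : X -> X -> R) (f : X -> X -> Prop) :
  is_dmds_generator d f -> usc_compact_valued d (converse f).
Proof.
  intros [G [[HGu [HGc [_ [_ HGinv]]]] HG1]]. split.
  - intros x U HU HxU. destruct (HGu x (-1)%Z U HU) as [e [He HGe]].
    { intros y Hy. apply HxU, HG1, HGinv, Hy. }
    exists e. split; auto. intros x' Hx' y Hy. apply (HGe x' Hx'), HGinv, HG1, Hy.
  - intro x. apply compact_ext with (G x (-1)%Z); [| apply HGc].
    intro y. unfold converse. rewrite HGinv. apply HG1.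
Qed.

Theorem mainTheorem7 (X : Type) (d : X -> X -> R) (a b : R)
  (F : R -> X -> X -> Prop) (N : X -> Prop) (mu : R)
  (P1 P2 Q1 Q2 R1 R2 : X -> Prop) :
  is_metric d -> locally_compact d -> a <= b ->
  param_family d a b F ->
  in_interval a b mu ->
  isolating_nbhd d (F mu) N ->
  weak_index_pair d (F mu) N P1 P2 ->
  weak_index_pair d (F mu) N Q1 Q2 ->
  weak_index_pair d (F mu) N R1 R2 ->
  subset P1 (rel_interior d N Q1) -> subset P2 (rel_interior d N Q2) ->
  subset Q1 (rel_interior d N R1) -> subset Q2 (rel_interior d N R2) ->
  exists L0 : R -> Prop,
    subset L0 (in_interval a b) /\
    (exists e, 0 < e /\ forall l, in_interval a b l -> Rabs (l - mu) < e -> L0 l) /\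
    forall l, L0 l -> exists PL1 PL2 : X -> Prop,
      weak_index_pair d (F l) N PL1 PL2 /\
      subset P1 PL1 /\ subset P2 PL2 /\ subset PL1 R1 /\ subset PL2 R2.
Proof.
  intros Hd _ _ [HFu [HFc HFgen]] Hmu [HN _] HP HQ _ HPQ1 HPQ2 HQR1 HQR2.
  assert (Hconv : usc_compact_valued d (converse (F mu)))
    by now apply dmds_generator_converse, HFgen.
  destruct (continuation_near N F a b mu Hd HN HFu HFc Hmu Hconv P1 P2 Q1 Q2 R1 R2
              HP HQ HPQ1 HPQ2 HQR1 HQR2) as [e [He Hnear]].
  exists (fun l => in_interval a b l /\ Rabs (l - mu) < e).
  split; [intros l [Hl _]; exact Hl |]. split; [now exists e |].
  intros l [Hl Hle]. now apply Hnear.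
Qed.
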